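(* In a minimum Walrasian equilibrium of a market with unit-demand buyers, every item $j$ with strictly positive price $p_j>0$ has a buyer that supports it.
   Context: Buyer $i$ is unit demand if there are $v_{i,j}\ge0$ with $v_i(S)=\max_{j\in S}v_{i,j}$, $v_i(\emptyset)=0$; utility is quasi-linear. A Walrasian equilibrium is a price vector $p\ge0$ and an allocation $\mathrm{win}$ assigning every item $j$ to a buyer $\mathrm{win}(j)$ such that each buyer's bundle maximizes $v_i(T)-\sum_{j\in T}p_j$ over all bundles $T$. A minimum Walrasian equilibrium is one whose price vector is coordinatewise at most that of every Walrasian equilibrium. Buyer $i$ supports the price of item $j$ if $\mathrm{win}(j)\neq i$ and either (1) there is an item $k$ with $\mathrm{win}(k)=i$ and $v_{i,k}-p_k=v_{i,j}-p_j$, or (2) buyer $i$ receives no item and $v_{i,j}=p_j$. *)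

From mathcomp Require Import all_boot all_order all_algebra.
Set Implicit Arguments. Unset Strict Implicit. Unset Printing Implicit Defensive.
Import Order.TTheory GRing.Theory Num.Theory.
Local Open Scope ring_scope.

(* Market: finite set of buyers B, finite set of items I, values in a real field R.
   v i j = v_{i,j} >= 0. Unit-demand valuation: v_i(S) = max_{j in S} v_{i,j},
   v_i(emptyset) = 0 (since v >= 0 this is the max folded from 0). *)
Section Market.
Variables (R : realFieldType) (B I : finType) (v : B -> I -> R).

Definition unit_val (i : B) (S : {set I}) : R := \big[Num.max/0]_(j in S) v i j.

Definition utility (p : I -> R) (i : B) (T : {set I}) : R :=
  unit_val i T - \sum_(j in T) p j.

Definition bundle (win : I -> B) (i : B) : {set I} := [set j | win j == i].

Definition walrasian (p : I -> R) (win : I -> B) : Prop :=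
  (forall j, 0 <= p j) /\
  (forall i (T : {set I}), utility p i T <= utility p i (bundle win i)).

Definition min_walrasian (p : I -> R) (win : I -> B) : Prop :=
  walrasian p win /\
  (forall (p' : I -> R) (win' : I -> B), walrasian p' win' -> forall j, p j <= p' j).

Definition supports (p : I -> R) (win : I -> B) (i : B) (j : I) : Prop :=
  win j != i /\
  ((exists k, win k = i /\ v i k - p k = v i j - p j) \/
   ((forall k, win k != i) /\ v i j = p j)).
End Market.

From mathcomp Require Import all_boot all_order all_algebra.
From mathcomp Require Import lra.
From Stdlib Require Import Classical.
Set Implicit Arguments. Unset Strict Implicit. Unset Printing Implicit Defensive.
Import Order.TTheory GRing.Theory Num.Theory.
Local Open Scope ring_scope.

(* Suppose no buyer supports an item [j] with [p j > 0]. Every buyer other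
   than the winner of [j] then strictly prefers its own bundle to every bundle
   containing [j]: the best item [k] of such a bundle is either [j], which that
   buyer does not weakly demand, or another item, and then the bundle costs
   [p j > 0] more than [{k}]. By finiteness these strict preferences hold with
   a uniform margin [0 < e <= p j], so lowering [p j] by [e] keeps the
   allocation an equilibrium, contradicting minimality of [p]. *)

Section PositiveSums.
Variables (R : numDomainType) (I : finType) (p : I -> R).
Hypothesis p_ge0 : forall k, 0 <= p k.

Lemma ler_sum_mem (T : {set I}) j : j \in T -> p j <= \sum_(k in T) p k.
Proof. by move=> jT; rewrite (bigD1 j) //= lerDl sumr_ge0. Qed.

Lemma ler_sum_mem2 (T : {set I}) j k : j \in T -> k \in T -> k != j ->
  p k + p j <= \sum_(l in T) p l.
Proof.
move=> jT kT kj; rewrite (bigD1 j) //= (bigD1 k) /=; last by rewrite kT.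
by rewrite addrA [p j + _]addrC lerDl sumr_ge0.
Qed.

End PositiveSums.

Section UniformMargin.
Variables (R : realDomainType) (T : finType).

Lemma exists_uniform_margin (P : pred T) (f : T -> R) (c : R) :
  0 < c -> (forall x, P x -> 0 < f x) ->
  exists2 e, 0 < e & e <= c /\ forall x, P x -> e <= f x.
Proof.
move=> c_gt0 f_gt0; exists (\big[Order.min/c]_(x | P x) f x).
  exact: lt_bigmin.
split; first exact: bigmin_le_id.
by move=> x Px; apply: (bigmin_le_cond _ (P := P)).
Qed.

End UniformMargin.

Section UnitDemand.
Variables (R : realFieldType) (B I : finType) (v : B -> I -> R).
Hypothesis v_ge0 : forall i j, 0 <= v i j.

Lemma unit_val_attained i (S : {set I}) j : j \in S ->
  exists2 k, k \in S & unit_val v i S = v i k.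
Proof.
move=> jS; rewrite /unit_val (bigmax_eq_arg _ _ _ _ jS); last first.
  by move=> k _; exact: v_ge0.
by case: (arg_maxP (v i) jS) => k kS _; exists k.
Qed.

Lemma utility_set1 (p : I -> R) i k : utility v p i [set k] = v i k - p k.
Proof. by rewrite /utility /unit_val bigmax_set1 max_l // big_set1. Qed.

Lemma utility_set0 (p : I -> R) i : utility v p i set0 = 0.
Proof. by rewrite /utility /unit_val !big_set0 subr0. Qed.

Variables (p : I -> R).
Hypothesis p_ge0 : forall k, 0 <= p k.

Lemma utility_le_best_item i (T : {set I}) j : j \in T ->
  exists2 k, k \in T &
    utility v p i T + (if k == j then 0 else p j) <= v i k - p k.
Proof.
move=> jT; have [k kT Tk] := unit_val_attained i jT.
exists k => //; rewrite /utility Tk.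
case: eqVneq => [->|kj].
  by have := ler_sum_mem p_ge0 jT; lra.
by have := ler_sum_mem2 p_ge0 jT kT kj; lra.
Qed.

End UnitDemand.

Section Equilibrium.
Variables (R : realFieldType) (B I : finType) (v : B -> I -> R).
Hypothesis v_ge0 : forall i j, 0 <= v i j.
Variables (p : I -> R) (win : I -> B).
Hypothesis p_eq : walrasian v p win.

Let p_ge0 : forall k, 0 <= p k. Proof. by case: p_eq. Qed.

Lemma item_utility_le_bundle i k :
  v i k - p k <= utility v p i (bundle win i).
Proof. by rewrite -(utility_set1 v_ge0); case: p_eq => _; apply. Qed.

Lemma unsupported_item_utility_lt_bundle i j :
  win j != i -> ~ supports v p win i j ->
  v i j - p j < utility v p i (bundle win i).
Proof.
move=> wj unsupp; rewrite lt_def item_utility_le_bundle andbT.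
apply: contra_notN unsupp => /eqP tie; split=> //.
case: (pickP (fun k => win k == i)) => [k0 /eqP wk0 | none].
- left; have k0b : k0 \in bundle win i by rewrite inE wk0.
  have [k kb kbest] := utility_le_best_item v_ge0 p_ge0 i k0b.
  exists k; split; first by move: kb; rewrite inE => /eqP.
  apply/eqP; rewrite eq_le -tie item_utility_le_bundle /=.
  by apply: le_trans kbest; rewrite lerDl; case: eqP.
- right; split=> [k|]; first by rewrite none.
  have bundle0 : bundle win i = set0.
    by apply/setP => k; rewrite inE in_set0 none.
  by apply/eqP; rewrite -subr_eq0 -tie bundle0 utility_set0.
Qed.

Lemma unsupported_utility_lt_bundle i j (T : {set I}) :
  0 < p j -> win j != i -> ~ supports v p win i j -> j \in T ->
  utility v p i T < utility v p i (bundle win i).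
Proof.
move=> pj_gt0 wj unsupp jT.
have [k kT kbest] := utility_le_best_item v_ge0 p_ge0 i jT.
case: eqVneq kbest => [-> | kj] kbest.
  by rewrite addr0 in kbest; apply: le_lt_trans kbest _;
    exact: unsupported_item_utility_lt_bundle.
apply: lt_le_trans (item_utility_le_bundle i k).
by apply: lt_le_trans kbest; rewrite ltrDl.
Qed.

End Equilibrium.

Section LowerPrice.
Variables (R : realFieldType) (B I : finType) (v : B -> I -> R).
Variables (p : I -> R) (j : I) (e : R).

Definition lower_price (k : I) : R := if k == j then p j - e else p k.

Lemma utility_lower_price i (T : {set I}) :
  utility v lower_price i T = utility v p i T + (if j \in T then e else 0).
Proof.
rewrite /utility; case: ifP => jT; last first.
  rewrite addr0; congr (_ - _); apply: eq_bigr => k kT.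
  by rewrite /lower_price; case: eqP => // kj; rewrite kj jT in kT.
rewrite (bigD1 j) //= [X in _ = _ - X + _](bigD1 j) //= /lower_price eqxx.
rewrite (eq_bigr p); last by move=> k /andP[_ /negbTE ->].
lra.
Qed.

(* Only buyers other than the winner of [j] can be tempted by the discount,
   and only towards bundles containing [j]. *)
Lemma walrasian_lower_price win : walrasian v p win -> 0 <= e <= p j ->
  (forall i (T : {set I}), win j != i -> j \in T ->
     utility v p i T + e <= utility v p i (bundle win i)) ->
  walrasian v lower_price win.
Proof.
move=> [p_ge0 p_opt] /andP[e_ge0 e_le] margin; split.
  by move=> k; rewrite /lower_price; case: eqP; rewrite ?subr_ge0.
move=> i T; rewrite !utility_lower_price [j \in bundle _ _]inE.
have [<- | wj] := eqVneq (win j) i.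
  by rewrite lerD ?p_opt //; case: ifP.
rewrite addr0; case: ifP => jT; last by rewrite addr0 p_opt.
exact: margin.
Qed.

End LowerPrice.

Theorem mainTheorem8 (R : realFieldType) (B I : finType) (v : B -> I -> R)
  (v_ge0 : forall i j, 0 <= v i j) (p : I -> R) (win : I -> B) :
  min_walrasian v p win ->
  forall j, 0 < p j -> exists i, supports v p win i j.
Proof.
move=> [p_eq p_min] j pj_gt0; apply: NNPP => no_support.
have strict (x : B * {set I}) : (win j != x.1) && (j \in x.2) ->
    0 < utility v p x.1 (bundle win x.1) - utility v p x.1 x.2.
  case: x => i T /andP[/= wj jT]; rewrite subr_gt0.
  apply: (unsupported_utility_lt_bundle v_ge0 p_eq pj_gt0 wj _ jT) => supp.
  by apply: no_support; exists i.
have [e e_gt0 [e_le margin]] := exists_uniform_margin pj_gt0 strict.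
have p'_eq : walrasian v (lower_price p j e) win.
  apply: walrasian_lower_price => //; first by rewrite e_le ltW.
  move=> i T wj jT; rewrite -lerBrDl.
  by apply: (margin (i, T)); rewrite /= wj jT.
have := p_min _ _ p'_eq j; rewrite /lower_price eqxx; lra.
Qed.
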